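(* Let $\mathcal N$ be an occurrence net, $C$ a cut of $\mathcal N$ and $c\in C$. Then $\mathit{LKC}(c)\subseteq\lfloor C\rfloor$, where $\mathit{LKC}(c)=\{p\in\mathcal P\mid p\not<c\ \text{and}\ t<c\text{ for all }t\in{}^\bullet p\}$.
   Context: A Petri net $(\mathcal P,\mathcal T,\mathcal F,\mathit{In})$ has disjoint places $\mathcal P$ and transitions $\mathcal T$, a flow relation $\mathcal F$ that is a multiset over $(\mathcal P\times\mathcal T)\cup(\mathcal T\times\mathcal P)$, and a finite multiset $\mathit{In}$ over $\mathcal P$; ${}^\bullet x(y)=\mathcal F(y,x)$, $x^\bullet(y)=\mathcal F(x,y)$, and every transition has finite nonempty pre- and postcondition. Let $<$ be the transitive closure of $\{(x,y)\mid\mathcal F(x,y)>0\}$ and $\le$ its reflexive-transitive closure; the causal past of a set $S$ of nodes is $\lfloor S\rfloor=\{y\mid y\le x\text{ for some }x\in S\}$. Nodes $x,y$ are in conflict if there is a place $p\ne x,y$ and distinct transitions $t_1,t_2\in p^\bullet$ with $t_1\le x$ and $t_2\le y$; they are concurrent if neither $x\le y$ nor $y\le x$ nor in conflict. An occurrence net is a Petri net in which pre- and postconditions of transitions are sets, every place has at most one incoming transition, $\mathit{In}=\{p\mid{}^\bullet p=\emptyset\}$, $\mathcal F^{-1}$ is well-founded, and no transition is in conflict with itself. A cut is a maximal set of pairwise concurrent places. *)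

From Stdlib Require Import Relations List.

Record PetriNet := {
  place : Type;
  trans : Type;
  (* flow relation: a multiset over (P x T) u (T x P) *)
  Fpt : place -> trans -> nat;
  Ftp : trans -> place -> nat;
  In : place -> nat;
  In_finite : exists l : list place, forall p, In p > 0 -> List.In p l;
  pre_finite : forall t, exists l : list place, forall p, Fpt p t > 0 -> List.In p l;
  post_finite : forall t, exists l : list place, forall p, Ftp t p > 0 -> List.In p l;
  pre_nonempty : forall t, exists p, Fpt p t > 0;
  post_nonempty : forall t, exists p, Ftp t p > 0
}.

Definition node (N : PetriNet) : Type := (place N + trans N)%type.

Definition F (N : PetriNet) (x y : node N) : nat :=
  match x, y with
  | inl p, inr t => Fpt N p t
  | inr t, inl p => Ftp N t p
  | _, _ => 0
  end.

Definition flow (N : PetriNet) (x y : node N) : Prop := F N x y > 0.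

Definition nlt (N : PetriNet) : relation (node N) := clos_trans _ (flow N).
Definition nle (N : PetriNet) : relation (node N) := clos_refl_trans _ (flow N).

Definition causal_past (N : PetriNet) (S : node N -> Prop) : node N -> Prop :=
  fun y => exists x, S x /\ nle N y x.

Definition conflict (N : PetriNet) (x y : node N) : Prop :=
  exists (p : place N) (t1 t2 : trans N),
    inl p <> x /\ inl p <> y /\ t1 <> t2 /\
    Fpt N p t1 > 0 /\ Fpt N p t2 > 0 /\
    nle N (inr t1) x /\ nle N (inr t2) y.

Definition concurrent (N : PetriNet) (x y : node N) : Prop :=
  ~ nle N x y /\ ~ nle N y x /\ ~ conflict N x y.

Definition occurrence_net (N : PetriNet) : Prop :=
  (* pre- and postconditions of transitions are sets *)
  (forall p t, Fpt N p t <= 1) /\ (forall t p, Ftp N t p <= 1) /\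
  (forall p t1 t2, Ftp N t1 p > 0 -> Ftp N t2 p > 0 -> t1 = t2) /\
  (* In = { p | pre(p) = empty } (as a multiset: multiplicity 1 or 0) *)
  (forall p, (In N p = 1 /\ forall t, Ftp N t p = 0) \/
             (In N p = 0 /\ exists t, Ftp N t p > 0)) /\
  (* F^{-1} is well-founded: no infinite backward F-chain *)
  well_founded (flow N) /\
  (forall t, ~ conflict N (inr t) (inr t)).

Definition pairwise_concurrent (N : PetriNet) (C : place N -> Prop) : Prop :=
  forall p q, C p -> C q -> p <> q -> concurrent N (inl p) (inl q).

Definition cut (N : PetriNet) (C : place N -> Prop) : Prop :=
  pairwise_concurrent N C /\
  forall D : place N -> Prop, pairwise_concurrent N D ->
    (forall p, C p -> D p) -> forall p, D p -> C p.

Definition as_nodes (N : PetriNet) (C : place N -> Prop) : node N -> Prop :=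
  fun x => match x with inl p => C p | inr _ => False end.

Definition LKC (N : PetriNet) (c : place N) : place N -> Prop :=
  fun p => ~ nlt N (inl p) (inl c) /\
           forall t, Ftp N t p > 0 -> nlt N (inr t) (inl c).

(* Suppose a place p of LKC(c) lies outside the causal past of C.  Every
   pre-transition of p precedes c, so anything strictly below p is strictly
   below c; as c is concurrent with the rest of C (and with itself no place
   is in conflict), this makes p concurrent with every place of C.  Then
   C + {p} is pairwise concurrent, so p is in C by maximality, contradicting
   p outside the causal past of C. *)
From Stdlib Require Import Relations Classical Transitive_Closure.

Lemma clos_rt_eq_or_t {A} {R : relation A} {x y} :
  clos_refl_trans A R x y -> x = y \/ clos_trans A R x y.
Proof.
  induction 1 as [x y Hxy | x | x y z _ [<- | Hxy] _ [<- | Hyz]]; auto.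
  - right; now constructor.
  - right; now apply t_trans with y.
Qed.

Section Causality.

Context {N : PetriNet}.

Lemma nlt_nle {x y} : nlt N x y -> nle N x y.
Proof. apply clos_t_clos_rt. Qed.

Lemma nle_nlt_trans {x y z} : nle N x y -> nlt N y z -> nlt N x z.
Proof. apply clos_rt_t. Qed.

Lemma nlt_irrefl : well_founded (flow N) -> forall x, ~ nlt N x x.
Proof.
  intros Hwf x.
  induction (wf_clos_trans _ _ Hwf x) as [x _ IH].
  intros Hx; exact (IH x Hx Hx).
Qed.

(* Flow alternates between places and transitions, so the last step into a
   place comes from one of its pre-transitions. *)
Lemma nlt_place_inv {x p} :
  nlt N x (inl p) -> exists t, Ftp N t p > 0 /\ nle N x (inr t).
Proof.
  intros H; apply clos_trans_tn1 in H.
  inversion H as [y Hflow | y z Hflow Hxy]; subst.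
  - destruct x as [q | t]; [inversion Hflow|].
    exists t; split; [exact Hflow | apply rt_refl].
  - destruct y as [q | t]; [inversion Hflow|].
    exists t; split; [exact Hflow | now apply nlt_nle, clos_tn1_trans].
Qed.

Lemma conflict_sym {x y} : conflict N x y -> conflict N y x.
Proof.
  intros (r & t1 & t2 & Hx & Hy & Hne & H1 & H2 & Hle1 & Hle2).
  exists r, t2, t1; repeat split; auto.
Qed.

Lemma concurrent_sym {x y} : concurrent N x y -> concurrent N y x.
Proof.
  intros (Hxy & Hyx & Hc); repeat split; auto.
  intros H; apply Hc, conflict_sym, H.
Qed.

(* Acyclicity supplies the side conditions r <> x, r <> y of a conflict. *)
Lemma conflict_of_branches {r t1 t2 x y} :
  well_founded (flow N) ->
  t1 <> t2 -> Fpt N r t1 > 0 -> Fpt N r t2 > 0 ->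
  nle N (inr t1) x -> nle N (inr t2) y -> conflict N x y.
Proof.
  intros Hwf Hne H1 H2 Hx Hy.
  assert (Hr : forall t z, Fpt N r t > 0 -> nle N (inr t) z -> inl r <> z).
  { intros t z Ht Hz <-.
    apply (nlt_irrefl Hwf (inr t)), (nle_nlt_trans Hz).
    now apply t_step. }
  exists r, t1, t2; repeat split; eauto.
Qed.

End Causality.

Section OccurrenceNet.

Context {N : PetriNet}.
Hypothesis Hocc : occurrence_net N.

Let Hwf : well_founded (flow N).
Proof. apply Hocc. Qed.

Lemma place_not_self_conflict c : ~ conflict N (inl c) (inl c).
Proof.
  destruct Hocc as (_ & _ & Huniq & _ & _ & Hself).
  intros (r & t1 & t2 & _ & _ & Hne & H1 & H2 & Hle1 & Hle2).
  destruct (clos_rt_eq_or_t Hle1) as [? | Hlt1]; [discriminate|].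
  destruct (clos_rt_eq_or_t Hle2) as [? | Hlt2]; [discriminate|].
  destruct (nlt_place_inv Hlt1) as (u1 & Hu1 & Hle1').
  destruct (nlt_place_inv Hlt2) as (u2 & Hu2 & Hle2').
  rewrite (Huniq c u2 u1 Hu2 Hu1) in Hle2'.
  exact (Hself u1 (conflict_of_branches Hwf Hne H1 H2 Hle1' Hle2')).
Qed.

Context {C : place N -> Prop}.
Hypothesis HC : cut N C.

Lemma cut_not_lt {q c} : C q -> C c -> ~ nlt N (inl q) (inl c).
Proof.
  intros Hq Hc Hlt.
  destruct (classic (q = c)) as [<- | Hne].
  - exact (nlt_irrefl Hwf _ Hlt).
  - destruct (proj1 HC q c Hq Hc Hne) as (Hle & _); exact (Hle (nlt_nle Hlt)).
Qed.

Lemma cut_conflict_free {q c} : C q -> C c -> ~ conflict N (inl q) (inl c).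
Proof.
  intros Hq Hc.
  destruct (classic (q = c)) as [<- | Hne].
  - apply place_not_self_conflict.
  - apply (proj1 HC q c Hq Hc Hne).
Qed.

Lemma cut_maximal p :
  (forall q, C q -> concurrent N (inl p) (inl q)) -> C p.
Proof.
  intros Hp; apply (proj2 HC (fun x => C x \/ x = p)); [| now left | now right].
  intros x y [Hx | <-] [Hy | <-] Hxy.
  - exact (proj1 HC x y Hx Hy Hxy).
  - exact (concurrent_sym (Hp x Hx)).
  - exact (Hp y Hy).
  - contradiction.
Qed.

Context {c : place N}.
Hypothesis Hc : C c.

Lemma LKC_lt_c {p x} : LKC N c p -> nlt N x (inl p) -> nlt N x (inl c).
Proof.
  intros [_ Hpre] Hx.
  destruct (nlt_place_inv Hx) as (t & Ht & Hxt).
  exact (nle_nlt_trans Hxt (Hpre t Ht)).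
Qed.

Lemma LKC_concurrent_cut {p q} :
  LKC N c p -> ~ causal_past N (as_nodes N C) (inl p) -> C q ->
  concurrent N (inl p) (inl q).
Proof.
  intros Hp Hpast Hq; split; [| split].
  - intros Hle; apply Hpast; now exists (inl q).
  - intros Hle; destruct (clos_rt_eq_or_t Hle) as [[= ->] | Hlt].
    + apply Hpast; exists (inl p); split; [exact Hq | apply rt_refl].
    + exact (cut_not_lt Hq Hc (LKC_lt_c Hp Hlt)).
  - intros (r & t1 & t2 & _ & _ & Hne & H1 & H2 & Hle1 & Hle2).
    destruct (clos_rt_eq_or_t Hle1) as [? | Hlt1]; [discriminate|].
    apply (cut_conflict_free Hq Hc), conflict_sym.
    exact (conflict_of_branches Hwf Hne H1 H2
             (nlt_nle (LKC_lt_c Hp Hlt1)) Hle2).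
Qed.

End OccurrenceNet.

Theorem mainTheorem17 (N : PetriNet) (C : place N -> Prop) (c : place N) :
  occurrence_net N -> cut N C -> C c ->
  forall p, LKC N c p -> causal_past N (as_nodes N C) (inl p).
Proof.
  intros Hocc HC Hc p Hp.
  apply NNPP; intros Hpast.
  assert (Cp : C p).
  { apply (cut_maximal HC); intros q Hq.
    exact (LKC_concurrent_cut Hocc HC Hc Hp Hpast Hq). }
  apply Hpast; exists (inl p); split; [exact Cp | apply rt_refl].
Qed.
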